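(* Let $L$ be a finite lattice which is a subdirect product $L\subseteq\prod_{i=1}^t L_i$ of finite lattices. Then every line top of $L$ is sub-irreducible, and consequently every line top of $L$ belongs to the scaffolding $G(L)$.
   Context: $\pi_i:L\to L_i$ is the surjective restricted projection, $\sigma_i(y):=\bigwedge\{x\in L:\pi_i(x)=y\}$, and $G(L):=\bigcup_{i=1}^t\sigma_i(L_i\setminus\{0\})$. An element $x$ is a line top if the set of its lower covers $x_1,\dots,x_n$ has $n\ge 3$ elements and their meet $\underline{x}=x_1\wedge\dots\wedge x_n$ is covered by each $x_i$. A quotient $a/b$ is prime if $b\prec a$; $a/b$ transposes up to $c/d$ if $a\wedge d=b$, $a\vee d=c$; quotients are projective if connected by a finite chain of up/down transpositions. An element $v\ne0$ is sub-irreducible if all prime quotients $v/w$ ($w\prec v$) are mutually projective. *)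

From HB Require Import structures.
From mathcomp Require Import all_boot all_order.
Set Implicit Arguments. Unset Strict Implicit. Unset Printing Implicit Defensive.
Import Order.TTheory.
Local Open Scope order_scope.

Section Defs.
Context {d : Order.disp_t} {L : finTBLatticeType d}.

Definition covers (b a : L) : bool :=
  (b < a) && [forall c : L, ~~ ((b < c) && (c < a))].

Definition lower_meet (x : L) : L := \meet_(y : L | covers y x) y.

Definition line_top (x : L) : bool :=
  (3 <= #|[pred y : L | covers y x]|)%N &&
  [forall y : L, covers y x ==> covers (lower_meet x) y].

(* quotients a/b are pairs (a, b); a/b transposes up to c/d *)
Definition transp_up (p q : L * L) : bool :=
  (p.1 `&` q.2 == p.2) && (p.1 `|` q.2 == q.1).

Definition transp_step (p q : L * L) : bool := transp_up p q || transp_up q p.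

Definition projective (p q : L * L) : bool := connect transp_step p q.

Definition sub_irreducible (v : L) : Prop :=
  v != \bot /\
  forall w1 w2 : L, covers w1 v -> covers w2 v -> projective (v, w1) (v, w2).
End Defs.

(* L is a subdirect product of the L_i (i < t): the map x |-> (pi i x)_i is an
   injective lattice homomorphism and every restricted projection is onto. *)
Definition subdirect_product {d : Order.disp_t} {L : finTBLatticeType d}
  (t : nat) (di : 'I_t -> Order.disp_t) (Li : forall i, finTBLatticeType (di i))
  (pi : forall i, L -> Li i) : Prop :=
  [/\ forall i (x y : L), pi i (x `&` y) = pi i x `&` pi i y,
      forall i (x y : L), pi i (x `|` y) = pi i x `|` pi i y,
      forall i (y : Li i), exists x : L, pi i x = y
    & forall x y : L, (forall i, pi i x = pi i y) -> x = y].

Definition sigma {d : Order.disp_t} {L : finTBLatticeType d} {dl : Order.disp_t}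
  {Li : finTBLatticeType dl} (p : L -> Li) (y : Li) : L :=
  \meet_(x : L | p x == y) x.

Definition scaffolding {d : Order.disp_t} {L : finTBLatticeType d}
  (t : nat) (di : 'I_t -> Order.disp_t) (Li : forall i, finTBLatticeType (di i))
  (pi : forall i, L -> Li i) (x : L) : Prop :=
  exists (i : 'I_t) (y : Li i), y != \bot /\ x = sigma (pi i) y.

(* Let m be the meet of the lower covers of a line top x.  Any two distinct
   lower covers a, b of x satisfy a | b = x and a & b = m, so a third lower
   cover c gives the up-transpositions c/m -> x/a and c/m -> x/b: x is
   sub-irreducible.  If x were outside the scaffolding, then for every i the
   least preimage of pi_i x would lie below some lower cover j of x, forcing
   pi_i j = pi_i x, hence pi_i k = pi_i m for every other lower cover k; as x is
   the join of two such k, pi_i m = pi_i x.  Injectivity then gives m = x. *)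
From HB Require Import structures.
From mathcomp Require Import all_boot all_order.
Set Implicit Arguments. Unset Strict Implicit. Unset Printing Implicit Defensive.
Import Order.TTheory.
Local Open Scope order_scope.

Lemma card_gt2_other (T : finType) (A : {pred T}) (a b : T) :
  (2 < #|A|)%N -> exists c, [&& c \in A, c != a & c != b].
Proof.
move=> A_gt2.
have : (0 < #|[predD1 [predD1 A & a] & b]|)%N.
  rewrite lt0n; apply/negP => /eqP A_ab0; move: A_gt2.
  rewrite (cardD1 a) (cardD1 b [predD1 A & a]) A_ab0 addn0.
  by case: (_ \in _); case: (_ \in _).
case/card_gt0P => c; rewrite !inE => /and3P [cb ca cA].
by exists c; rewrite cA ca cb.
Qed.

Section Covers.
Context {d : Order.disp_t} {L : finTBLatticeType d}.
Implicit Types a b c m x y z : L.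

Lemma covers_lt b a : covers b a -> b < a.
Proof. by case/andP. Qed.

Lemma covers_between b a c : covers b a -> b < c -> c < a -> False.
Proof.
by case/andP=> _ /forallP /(_ c); rewrite negb_and => /orP [] /negP; auto.
Qed.

Lemma exists_lower_cover_above z x : z < x -> exists2 y, covers y x & z <= y.
Proof.
move=> zx; have [n] := ubnP #|[pred u | (z < u) && (u < x)]|.
elim: n z zx => // n IH z zx; case: (boolP (covers z x)) => [zx_cov _|].
  by exists z.
rewrite /covers zx /= => /forallPn [c /negbNE /andP [zc cx]] card_lt.
have [|y yx cy] := IH c cx; last by exists y; rewrite // (le_trans (ltW zc)).
rewrite ltnS in card_lt; apply: leq_trans card_lt.
apply/proper_card/properP; split.
  by apply/subsetP => u; rewrite !inE => /andP [cu ->]; rewrite (lt_trans zc).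
by exists c; rewrite !inE ?zc ?cx // ltxx.
Qed.

Lemma lower_covers_join a b x :
  covers a x -> covers b x -> a != b -> a `|` b = x.
Proof.
move=> ax bx ab; have : a `|` b <= x by rewrite leUx !ltW ?covers_lt.
rewrite le_eqVlt => /orP [/eqP // | abx]; exfalso.
move: (leUl a b); rewrite le_eqVlt => /orP [/eqP a_ab | a_lt]; last first.
  exact: covers_between ax a_lt abx.
apply: covers_between bx _ (covers_lt ax).
by rewrite lt_neqAle eq_sym ab a_ab leUr.
Qed.

Lemma upper_covers_meet m a b :
  covers m a -> covers m b -> a != b -> a `&` b = m.
Proof.
move=> ma mb ab; have : m <= a `&` b by rewrite lexI !ltW ?covers_lt.
rewrite le_eqVlt => /orP [/eqP // | m_ab]; exfalso.
move: (leIl a b); rewrite le_eqVlt => /orP [/eqP ab_a | ab_lt]; last first.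
  exact: covers_between ma m_ab ab_lt.
apply: covers_between mb (covers_lt ma) _.
by rewrite lt_neqAle ab -ab_a leIr.
Qed.

End Covers.

Section LineTop.
Context {d : Order.disp_t} {L : finTBLatticeType d}.
Variable x : L.
Hypothesis x_line_top : line_top x.

Lemma line_top_card : (2 < #|[pred y : L | covers y x]|)%N.
Proof. by case/andP: x_line_top. Qed.

Lemma lower_meet_covered y : covers y x -> covers (lower_meet x) y.
Proof. by case/andP: x_line_top => _ /forallP /(_ y) /implyP. Qed.

Lemma line_top_lower_covers_meet a b :
  covers a x -> covers b x -> a != b -> a `&` b = lower_meet x.
Proof. by move=> ax bx; apply: upper_covers_meet; apply: lower_meet_covered. Qed.

Lemma exists_other_lower_cover a b :
  exists c, [&& covers c x, c != a & c != b].
Proof. exact: card_gt2_other line_top_card. Qed.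

Lemma lower_meet_lt : lower_meet x < x.
Proof.
have [c /andP [cx _]] := exists_other_lower_cover x x.
exact: lt_trans (covers_lt (lower_meet_covered cx)) (covers_lt cx).
Qed.

Lemma line_top_neq0 : x != \bot.
Proof. by apply: contraTneq lower_meet_lt => ->; rewrite ltx0. Qed.

Lemma line_top_sub_irreducible : sub_irreducible x.
Proof.
split; first exact: line_top_neq0.
move=> w1 w2 w1x w2x; case: (eqVneq w1 w2) => [-> | _]; first exact: connect0.
have [c /and3P [cx cw1 cw2]] := exists_other_lower_cover w1 w2.
have up w : covers w x -> c != w -> transp_up (c, lower_meet x) (x, w).
  move=> wx cw; rewrite /transp_up /= (line_top_lower_covers_meet cx wx cw).
  by rewrite (lower_covers_join cx wx cw) !eqxx.
apply: (connect_trans (y := (c, lower_meet x))); apply: connect1.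
  by rewrite /transp_step up ?orbT.
by rewrite /transp_step up.
Qed.

End LineTop.

Section Projection.
Context {d : Order.disp_t} {L : finTBLatticeType d}.
Context {dl : Order.disp_t} {M : finTBLatticeType dl}.
Variable p : L -> M.
Hypotheses (pI : forall x y, p (x `&` y) = p x `&` p y)
  (pU : forall x y, p (x `|` y) = p x `|` p y)
  (p_surj : forall y, exists x, p x = y).

Lemma proj_le (a b : L) : a <= b -> p a <= p b.
Proof. by move/meet_idPl => ab; apply/meet_idPl; rewrite -pI ab. Qed.

Lemma proj_top : p \top = \top.
Proof.
by have [u pu] := p_surj \top; rewrite -(join_l (lex1 u)) pU pu joinx1.
Qed.

Lemma proj_bot : p \bot = \bot.
Proof.
by have [u pu] := p_surj \bot; rewrite -(meet_l (le0x u)) pI pu meetx0.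
Qed.

Lemma sigma_le (x : L) : sigma p (p x) <= x.
Proof. by apply: meets_inf; rewrite /= eqxx. Qed.

Lemma sigma_bot : sigma p \bot = \bot.
Proof. by apply/eqP; rewrite -lex0; apply: meets_inf; rewrite /= proj_bot. Qed.

Lemma proj_sigma (x : L) : p (sigma p (p x)) = p x.
Proof.
apply/le_anti/andP; split; first exact/proj_le/sigma_le.
apply: (big_ind (fun a => p x <= p a)) => [|a b xa xb|u /eqP -> //].
  by rewrite proj_top lex1.
by rewrite pI lexI xa xb.
Qed.

(* The lower cover j above sigma p (p x) is the unique one not collapsed onto
   lower_meet x by p. *)
Lemma line_top_proj_lower_meet (x : L) :
  line_top x -> sigma p (p x) != x -> p (lower_meet x) = p x.
Proof.
move=> xlt sx.
have [j jx sj] : exists2 j, covers j x & sigma p (p x) <= j.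
  by apply: exists_lower_cover_above; rewrite lt_neqAle sx sigma_le.
have pj : p j = p x.
  apply/le_anti/andP; split; first exact/proj_le/ltW/covers_lt.
  by rewrite -{1}(proj_sigma x); apply: proj_le.
have other k : covers k x -> k != j -> p k = p (lower_meet x).
  move=> kx kj; rewrite -(line_top_lower_covers_meet xlt jx kx) 1?eq_sym //.
  by rewrite pI pj; apply/esym/meet_idPr/proj_le/ltW/covers_lt.
have [k /and3P [kx kj _]] := exists_other_lower_cover xlt j j.
have [l /and3P [lx lj lk]] := exists_other_lower_cover xlt j k.
by rewrite -[in RHS](lower_covers_join lx kx lk) pU (other l) ?(other k) ?joinxx.
Qed.

End Projection.

Theorem mainTheorem4 (d : Order.disp_t) (L : finTBLatticeType d)
  (t : nat) (di : 'I_t -> Order.disp_t) (Li : forall i, finTBLatticeType (di i))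
  (pi : forall i, L -> Li i) :
  subdirect_product pi ->
  forall x : L, line_top x -> sub_irreducible x /\ scaffolding pi x.
Proof.
case=> piI piU pi_surj pi_inj x xlt.
split; first exact: line_top_sub_irreducible.
have [/existsP [i /eqP sx] | /existsPn no_sigma] :=
  boolP [exists i, sigma (pi i) (pi i x) == x].
  exists i, (pi i x); split => //; apply: contraTneq (line_top_neq0 xlt).
  by move=> pix0; rewrite -sx pix0 sigma_bot ?eqxx.
have collapse : lower_meet x = x.
  by apply: pi_inj => i; apply: line_top_proj_lower_meet.
by move: (lower_meet_lt xlt); rewrite collapse ltxx.
Qed.
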